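(* Let $\star$ be a star operation on an integral domain $R$. (1) If every nonzero ideal of $R$ is $\star$-basic, then $R$ is completely integrally closed. (2) Every nonzero ideal of $R$ is $v$-basic if and only if $R$ is completely integrally closed.
   Context: A star operation on a domain $R$ with quotient field $K$ is a map $I\mapsto I^\star$ on nonzero fractional ideals with $(aI)^\star=aI^\star$ ($0\ne a\in K$), $R^\star=R$, $I\subseteq I^\star$, $I\subseteq J\Rightarrow I^\star\subseteq J^\star$, $I^{\star\star}=I^\star$. The $v$-operation is $I_v=(I^{-1})^{-1}$ where $I^{-1}=(R:I)=\{x\in K:xI\subseteq R\}$. For a nonzero ideal $I$, an ideal $J\subseteq I$ is a $\star$-reduction of $I$ if $(JI^n)^\star=(I^{n+1})^\star$ for some integer $n\ge0$; $I$ is $\star$-basic if every $\star$-reduction $J$ of $I$ satisfies $J^\star=I^\star$. A domain is completely integrally closed iff every nonzero ideal $I$ is $v$-invertible, i.e. $(II^{-1})_v=R$. *)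

(* A domain R is modelled as a subring (predicate) of a field K
   which is its quotient field; (fractional) ideals are predicates on K. *)
From HB Require Import structures.
From mathcomp Require Import all_boot all_order all_algebra.
Set Implicit Arguments. Unset Strict Implicit. Unset Printing Implicit Defensive.
Import GRing.Theory.
Local Open Scope ring_scope.

Section Defs.
Variable K : fieldType.

Definition is_domain_with_qf (R : K -> Prop) : Prop :=
  [/\ R 0, R 1,
      (forall x y, R x -> R y -> R (x - y)),
      (forall x y, R x -> R y -> R (x * y)) &
      (forall x, exists a b, [/\ R a, R b, b != 0 & x = a / b])].

Definition subsetK (I J : K -> Prop) : Prop := forall x, I x -> J x.
Definition eqsetK (I J : K -> Prop) : Prop := forall x, I x <-> J x.

Definition submodK (R I : K -> Prop) : Prop :=
  [/\ I 0, (forall x y, I x -> I y -> I (x + y)) &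
      (forall r x, R r -> I x -> I (r * x))].

Definition nz_frac_ideal (R I : K -> Prop) : Prop :=
  [/\ submodK R I, (exists x, I x /\ x != 0) &
      (exists d, [/\ R d, d != 0 & forall x, I x -> R (d * x)])].

Definition nz_ideal (R I : K -> Prop) : Prop :=
  [/\ submodK R I, (exists x, I x /\ x != 0) & subsetK I R].

Definition scaleK (a : K) (I : K -> Prop) : K -> Prop :=
  fun x => exists y, I y /\ x = a * y.

Definition mulK (I J : K -> Prop) : K -> Prop :=
  fun x => exists s : seq (K * K),
    (forall p, p \in s -> I p.1 /\ J p.2) /\ x = \sum_(p <- s) (p.1 * p.2).

Fixpoint powK (R I : K -> Prop) (n : nat) : K -> Prop :=
  match n with
  | 0 => R
  | n'.+1 => mulK I (powK R I n')
  end.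

Definition is_star_op (R : K -> Prop) (star : (K -> Prop) -> (K -> Prop)) : Prop :=
  (forall I, nz_frac_ideal R I -> nz_frac_ideal R (star I)) /\
  [/\ (forall a I, a != 0 -> nz_frac_ideal R I ->
         eqsetK (star (scaleK a I)) (scaleK a (star I))),
      eqsetK (star R) R,
      (forall I, nz_frac_ideal R I -> subsetK I (star I)),
      (forall I J, nz_frac_ideal R I -> nz_frac_ideal R J -> subsetK I J ->
         subsetK (star I) (star J)) &
      (forall I, nz_frac_ideal R I -> eqsetK (star (star I)) (star I))].

Definition invK (R I : K -> Prop) : K -> Prop :=
  fun x => forall y, I y -> R (x * y).

Definition vop (R : K -> Prop) (I : K -> Prop) : K -> Prop := invK R (invK R I).

Definition star_reduction (R : K -> Prop) (star : (K -> Prop) -> (K -> Prop))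
    (J I : K -> Prop) : Prop :=
  subsetK J I /\
  exists n : nat, eqsetK (star (mulK J (powK R I n))) (star (powK R I n.+1)).

Definition star_basic (R : K -> Prop) (star : (K -> Prop) -> (K -> Prop))
    (I : K -> Prop) : Prop :=
  forall J, nz_ideal R J -> star_reduction R star J I -> eqsetK (star J) (star I).

Definition compl_int_closed (R : K -> Prop) : Prop :=
  forall x : K, (exists d, [/\ R d, d != 0 & forall n : nat, R (d * x ^+ n)]) -> R x.

End Defs.

(** If [x] is almost integral over [R], witnessed by [d x^n ∈ R], then
    [I := d R[x]] is an ideal of [R] with [I·I = (dR)·I] and [I·R = I], so [dR]
    is a [⋆]-reduction of [I] (take [n = 1]).  If [I] is [⋆]-basic then
    [dx ∈ I ⊆ I^⋆ = (dR)^⋆ = dR], hence [x ∈ R].  The operation [v] satisfies the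
    two properties of [⋆] used here ([(dR)_v = dR] and [I ⊆ I_v]), which gives one
    half of (2).  Conversely, let [R] be completely integrally closed and [J] a
    [v]-reduction of [I], with [P := I^n].  For [z ∈ J^-1] and [a ∈ I] the element
    [w := za] maps [P_v ⊆ R] into itself, because [aP ⊆ (IP)_v = (JP)_v] and
    [z (JP)_v ⊆ P_v]; so [w] is almost integral, hence [w ∈ R].  Thus
    [J^-1 = I^-1] and [J_v = I_v]. *)
From HB Require Import structures.
From mathcomp Require Import all_boot all_order all_algebra.
From mathcomp Require Import ring.
From Stdlib Require Import FunctionalExtensionality PropExtensionality.
Set Implicit Arguments. Unset Strict Implicit. Unset Printing Implicit Defensive.
Import GRing.Theory.
Local Open Scope ring_scope.

Definition almost_integral (K : fieldType) (R : K -> Prop) (x : K) : Prop :=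
  exists d, [/\ R d, d != 0 & forall n : nat, R (d * x ^+ n)].

Section Domain.
Variables (K : fieldType) (R : K -> Prop).
Hypothesis hR : is_domain_with_qf R.

Lemma domR0 : R 0. Proof. by case: hR. Qed.
Lemma domR1 : R 1. Proof. by case: hR. Qed.
Lemma domRB x y : R x -> R y -> R (x - y). Proof. by case: hR => _ _ h _ _; apply: h. Qed.
Lemma domRM x y : R x -> R y -> R (x * y). Proof. by case: hR => _ _ _ h _; apply: h. Qed.

Lemma domRD x y : R x -> R y -> R (x + y).
Proof. by move=> Rx Ry; have := domRB Rx (domRB domR0 Ry); rewrite sub0r opprK. Qed.

Lemma eqsetK_eq (A B : K -> Prop) : eqsetK A B -> A = B.
Proof.
by move=> AB; apply: functional_extensionality => x; apply: propositional_extensionality.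
Qed.

Lemma mulK0 (A B : K -> Prop) : mulK A B 0.
Proof. by exists [::]; rewrite big_nil. Qed.

Lemma mulKD (A B : K -> Prop) x y : mulK A B x -> mulK A B y -> mulK A B (x + y).
Proof.
move=> [s [hs ->]] [t [ht ->]]; exists (s ++ t); rewrite big_cat; split => // p.
by rewrite mem_cat => /orP [] ?; [apply: hs | apply: ht].
Qed.

Lemma mulK_mul (A B : K -> Prop) a b : A a -> B b -> mulK A B (a * b).
Proof.
move=> Aa Bb; exists [:: (a, b)]; rewrite big_seq1; split => // p.
by rewrite inE => /eqP ->.
Qed.

Lemma mulK_sub (A B C : K -> Prop) : C 0 -> (forall x y, C x -> C y -> C (x + y)) ->
  (forall a b, A a -> B b -> C (a * b)) -> subsetK (mulK A B) C.
Proof.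
move=> C0 CD CM x [s [hs ->]]; elim: s hs => [|p s IHs] hs; first by rewrite big_nil.
rewrite big_cons; apply: CD; last by apply: IHs => q sq; apply: hs; rewrite in_cons sq orbT.
by have [] := hs p (mem_head _ _); apply: CM.
Qed.

Lemma mulKS (A A' B B' : K -> Prop) :
  subsetK A A' -> subsetK B B' -> subsetK (mulK A B) (mulK A' B').
Proof.
move=> AA' BB'; apply: mulK_sub; [exact: mulK0 | exact: mulKD |].
by move=> a b /AA' Aa /BB' Bb; apply: mulK_mul.
Qed.

Lemma mulKR (I : K -> Prop) : submodK R I -> mulK I R = I.
Proof.
case=> I0 ID IM; apply: eqsetK_eq => y; split.
  by apply: mulK_sub => // a r Ia Rr; rewrite mulrC; apply: IM.
by move=> Iy; rewrite -(mulr1 y); apply: mulK_mul => //; apply: domR1.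
Qed.

Lemma submodK_R : submodK R R.
Proof. by split; [exact: domR0 | exact: domRD | exact: domRM]. Qed.

Lemma submodK_scale (d : K) (T : K -> Prop) : submodK R T -> submodK R (scaleK d T).
Proof.
case=> T0 TD TM; split.
- by exists 0; rewrite mulr0.
- by move=> _ _ [t [Tt ->]] [t' [Tt' ->]]; exists (t + t'); rewrite mulrDr; split => //; apply: TD.
- by move=> r _ Rr [t [Tt ->]]; exists (r * t); rewrite mulrCA; split => //; apply: TM.
Qed.

Lemma nz_ideal_scale (d : K) (T : K -> Prop) :
  submodK R T -> T 1 -> d != 0 -> subsetK (scaleK d T) R -> nz_ideal R (scaleK d T).
Proof.
move=> modT T1 d0 dTR; split => //; first exact: submodK_scale.
by exists d; split => //; exists 1; rewrite mulr1.
Qed.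

Lemma nz_frac_R : nz_frac_ideal R R.
Proof.
split; first exact: submodK_R.
  by exists 1; split; [exact: domR1 | exact: oner_neq0].
by exists 1; split; [exact: domR1 | exact: oner_neq0 | move=> y; rewrite mul1r].
Qed.

Lemma nz_frac_of_ideal (I : K -> Prop) : nz_ideal R I -> nz_frac_ideal R I.
Proof.
case=> modI nzI IR; split => //.
by exists 1; split; [exact: domR1 | exact: oner_neq0 | move=> y /IR; rewrite mul1r].
Qed.

Section Adjoin.
Variable x : K.

Definition adjoinK : K -> Prop :=
  fun y => exists p : {poly K}, (forall i, R p`_i) /\ y = p.[x].

Lemma adjoinK_R c : R c -> adjoinK c.
Proof.
move=> Rc; exists c%:P; rewrite hornerC; split => // i.
by rewrite coefC; case: eqP => _ //; apply: domR0.
Qed.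

Lemma adjoinK_mul y y' : adjoinK y -> adjoinK y' -> adjoinK (y * y').
Proof.
move=> [p [Rp ->]] [q [Rq ->]]; exists (p * q); rewrite hornerM; split => // i.
rewrite coefM; apply: (big_ind R domR0 domRD) => j _; exact: domRM.
Qed.

Lemma adjoinK_id : adjoinK x.
Proof.
exists 'X; rewrite hornerX; split => // i.
by rewrite coefX; case: (i == 1)%N; [exact: domR1 | exact: domR0].
Qed.

Lemma submodK_adjoinK : submodK R adjoinK.
Proof.
split; first exact: adjoinK_R domR0.
  move=> _ _ [p [Rp ->]] [q [Rq ->]]; exists (p + q); rewrite hornerD.
  by split => // i; rewrite coefD; apply: domRD.
by move=> r y /adjoinK_R Rr /(adjoinK_mul Rr).
Qed.

Lemma scale_adjoinK_sub (d : K) :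
  (forall n : nat, R (d * x ^+ n)) -> subsetK (scaleK d adjoinK) R.
Proof.
move=> Rdx _ [_ [[p [Rp ->]] ->]]; rewrite horner_coef mulr_sumr.
by apply: (big_ind R domR0 domRD) => i _; rewrite mulrCA; apply: domRM.
Qed.

End Adjoin.

Lemma cic_of_basic (star : (K -> Prop) -> (K -> Prop)) :
  (forall d, d != 0 -> subsetK (star (scaleK d R)) (scaleK d R)) ->
  (forall I, nz_ideal R I -> subsetK I (star I)) ->
  (forall I, nz_ideal R I -> star_basic R star I) -> compl_int_closed R.
Proof.
move=> star_scaleR star_ext basic x [d [Rd d0 Rdx]].
pose T := adjoinK x; pose I := scaleK d T; pose J := scaleK d R.
have T1 : T 1 by apply: adjoinK_R domR1.
have I_ideal : nz_ideal R I.
  exact: nz_ideal_scale (submodK_adjoinK x) T1 d0 (scale_adjoinK_sub Rdx).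
have J_ideal : nz_ideal R J.
  by apply: nz_ideal_scale submodK_R domR1 d0 _ => _ [r [Rr ->]]; apply: domRM.
have JI : subsetK J I by move=> _ [r [Rr ->]]; exists r; split => //; apply: adjoinK_R.
have JI_II : mulK J I = mulK I I.
  apply: eqsetK_eq => y; split; first exact: mulKS.
  apply: mulK_sub; [exact: mulK0 | exact: mulKD |] => _ _ [t [Tt ->]] [t' [Tt' ->]].
  rewrite (_ : _ * _ = (d * 1) * (d * (t * t'))); last by ring.
  by apply: mulK_mul; [exists 1 | exists (t * t')]; split => //; [apply: domR1 | apply: adjoinK_mul].
have J_red : star_reduction R star J I.
  split => //; exists 1%N => y /=.
  by rewrite mulKR ?JI_II //; case: I_ideal.
have Idx : I (d * x) by exists x; split => //; apply: adjoinK_id.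
have /(basic I I_ideal J J_ideal J_red) /star_scaleR := star_ext I I_ideal _ Idx.
by case/(_ d0) => y [Ry /(mulfI d0) ->].
Qed.

Lemma invKS (I J : K -> Prop) : subsetK I J -> subsetK (invK R J) (invK R I).
Proof. by move=> IJ z zJ y /IJ; apply: zJ. Qed.

Lemma subsetK_vop (I : K -> Prop) : subsetK I (vop R I).
Proof. by move=> y Iy u uI; rewrite mulrC; apply: uI. Qed.

Lemma vop_subR (I : K -> Prop) : subsetK I R -> subsetK (vop R I) R.
Proof. by move=> IR y Iy; rewrite -(mulr1 y); apply: Iy => u /IR; rewrite mul1r. Qed.

Lemma vop_scaleR (d : K) : d != 0 -> subsetK (vop R (scaleK d R)) (scaleK d R).
Proof.
move=> d0 y dRy; exists (y / d); split; last by rewrite mulrC divfK.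
by apply: dRy => _ [r [Rr ->]]; rewrite mulKf.
Qed.

Lemma invK_mulK (J P : K -> Prop) z u :
  invK R J z -> invK R P u -> invK R (mulK J P) (z * u).
Proof.
move=> zJ uP; apply: mulK_sub; [by rewrite mulr0; apply: domR0 | |].
  by move=> s t Rs Rt; rewrite mulrDr; apply: domRD.
by move=> j p Jj Pp; rewrite mulrACA; apply: domRM; [apply: zJ | apply: uP].
Qed.

Lemma vop_mulK_invK (J P : K -> Prop) z q :
  invK R J z -> vop R (mulK J P) q -> vop R P (z * q).
Proof. by move=> zJ JPq u uP; rewrite -mulrA mulrCA; apply: JPq; apply: invK_mulK. Qed.

Lemma almost_integral_of_stable (A : K -> Prop) w e :
  subsetK A R -> A e -> e != 0 -> (forall v, A v -> A (w * v)) -> almost_integral R w.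
Proof.
move=> AR Ae e0 wA; exists e; split; [exact: AR | done |] => n; apply: AR.
by elim: n => [|n IHn]; rewrite ?expr0 ?mulr1 // exprS mulrCA; apply: wA.
Qed.

Lemma powK_subR (I : K -> Prop) n : subsetK I R -> subsetK (powK R I n) R.
Proof.
move=> IR; elim: n => [|n IHn] //=.
by apply: mulK_sub; [exact: domR0 | exact: domRD | move=> a b /IR Ra /IHn; apply: domRM].
Qed.

Lemma powK_neq0 (I : K -> Prop) n :
  (exists a, I a /\ a != 0) -> exists e, powK R I n e /\ e != 0.
Proof.
move=> [a [Ia a0]]; elim: n => [|n [e [Pe e0]]] /=.
  by exists 1; split; [exact: domR1 | exact: oner_neq0].
by exists (a * e); split; [exact: mulK_mul | exact: mulf_neq0].
Qed.

Lemma invK_sub_of_reduction (J I P : K -> Prop) e :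
  compl_int_closed R -> subsetK P R -> P e -> e != 0 ->
  eqsetK (vop R (mulK J P)) (vop R (mulK I P)) -> subsetK (invK R J) (invK R I).
Proof.
move=> cic PR Pe e0 JP_IP z zJ a Ia; apply: cic.
apply: (almost_integral_of_stable (vop_subR PR)) (subsetK_vop Pe) e0 _.
move=> v Pv u uP; rewrite [_ * v]mulrC -mulrA; apply: Pv => p Pp.
have JPap : vop R (mulK J P) (a * p) by apply/JP_IP/subsetK_vop/mulK_mul.
by rewrite mulrAC -(mulrA z a p); apply: (vop_mulK_invK zJ JPap).
Qed.

Lemma vop_basic_of_cic :
  compl_int_closed R -> forall I, nz_ideal R I -> star_basic R (vop R) I.
Proof.
move=> cic I [_ nzI IR] J _ [JI [n JP_IP]].
have [e [Pe e0]] := powK_neq0 n nzI.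
have JI' := invK_sub_of_reduction cic (powK_subR IR) Pe e0 JP_IP.
by move=> y; split; apply: invKS; [apply: invKS | apply: JI'].
Qed.

End Domain.

Theorem proposition1p4 (K : fieldType) (R : K -> Prop)
    (hR : is_domain_with_qf R) :
  (forall star : (K -> Prop) -> (K -> Prop), is_star_op R star ->
     (forall I, nz_ideal R I -> star_basic R star I) -> compl_int_closed R) /\
  ((forall I, nz_ideal R I -> star_basic R (vop R) I) <-> compl_int_closed R).
Proof.
split.
  move=> star [_ [star_scale star_R star_ext _ _]]; apply: (cic_of_basic hR).
  - move=> d d0 y /(star_scale d R d0 (nz_frac_R hR)) [z [/star_R Rz ->]].
    by exists z.
  - by move=> I /(nz_frac_of_ideal hR); apply: star_ext.
split; last exact: vop_basic_of_cic.
by apply: (cic_of_basic hR) => [d|I _]; [apply: vop_scaleR | apply: subsetK_vop].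
Qed.
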